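(* For every $k\geq 2$, $q(G_k)=q(G'_k)=2$; moreover $q(G'_1)=2$. In particular, for each $k\ge 2$ there is a symmetric orthogonal matrix in $\mathcal{S}(G_k)$.
   Context: For a graph $G$ on $n$ vertices, $\mathcal{S}(G)$ is the set of real symmetric $n\times n$ matrices $A=[a_{ij}]$ with $a_{ij}\neq0$ for $i\ne j$ iff $\{i,j\}\in E(G)$ (diagonal unrestricted); $q(G)$ is the minimum number of distinct eigenvalues of a matrix in $\mathcal{S}(G)$. Double-ended candle: for $k\geq 2$, $G_k$ is the graph on $\{1,\dots,2k\}$ with levels $L_0=\{1\}$, $L_i=\{2i,2i+1\}$ ($1\le i\le k-1$), $L_k=\{2k\}$, where two vertices are adjacent iff they lie in consecutive levels. Single-ended candle: for $k\ge1$, $G'_k$ is the graph on $\{1,\dots,2k+1\}$ with levels $L_0=\{1\}$, $L_i=\{2i,2i+1\}$ ($1\le i\le k$), where vertices in consecutive levels are adjacent, additionally $2k$ and $2k+1$ are adjacent, and there are no other edges ($G'_1=K_3$). *)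

From HB Require Import structures.
From mathcomp Require Import all_boot all_order all_algebra.
From mathcomp Require Import Rstruct.
From Stdlib Require Rdefinitions.
Notation R := Rdefinitions.R.
Set Implicit Arguments. Unset Strict Implicit. Unset Printing Implicit Defensive.
Import Order.TTheory GRing.Theory Num.Theory.
Local Open Scope ring_scope.

(* Vertices 1..n of the paper are the ordinals 0..n-1 ('I_n): paper vertex v
   is ordinal v-1. *)

(* Level of the (0-based) vertex i: paper vertex v = i+1 lies in level
   floor(v/2) (L_0 = {1}, L_i = {2i,2i+1}, and the top vertex 2k in L_k). *)
Definition lvl (i : nat) : nat := (i.+1)./2.

Definition level_adj (n : nat) (i j : 'I_n) : bool :=
  (lvl i == (lvl j).+1) || (lvl j == (lvl i).+1).

Definition Gk (k : nat) : rel 'I_(2 * k) := fun i j => level_adj i j.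

Definition Gk' (k : nat) : rel 'I_(2 * k + 1) := fun i j =>
  level_adj i j
  || ((nat_of_ord i == (2 * k).-1)%N && (nat_of_ord j == 2 * k)%N)
  || ((nat_of_ord j == (2 * k).-1)%N && (nat_of_ord i == 2 * k)%N).

Definition inS (n : nat) (G : rel 'I_n) (A : 'M[R]_n) : Prop :=
  A^T = A /\ (forall i j : 'I_n, i != j -> (A i j != 0) = G i j).

Definition num_distinct_eig (n : nat) (A : 'M[R]_n) (m : nat) : Prop :=
  exists s : seq R, [/\ uniq s, size s = m & forall a : R, eigenvalue A a <-> a \in s].

Definition q_eq (n : nat) (G : rel 'I_n) (m : nat) : Prop :=
  (exists A : 'M[R]_n, inS G A /\ num_distinct_eig A m) /\
  (forall (A : 'M[R]_n) (m' : nat), inS G A -> num_distinct_eig A m' -> (m <= m')%N).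

Arguments Gk k : clear implicits.
Arguments Gk' k : clear implicits.

From HB Require Import structures.
From mathcomp Require Import all_boot all_order all_algebra all_fingroup.
From mathcomp Require Import Rstruct complex ring zify.
Import Order.TTheory GRing.Theory Num.Theory.
Local Open Scope ring_scope.
Set Implicit Arguments. Unset Strict Implicit. Unset Printing Implicit Defensive.
Arguments lvl : simpl never.

(** The lower bound [q >= 2] holds for every graph with an edge: a real symmetric
    matrix with a single eigenvalue is scalar (spectral theorem), hence has no
    nonzero off-diagonal entry.  For the upper bound it suffices to exhibit a
    symmetric involution [A] (eigenvalues [1] and [-1]) with the candle pattern.
    With vertices [0 .. n-1] the levels are [{0}, {1,2}, {3,4}, ...].  Let [Q] be
    the block-diagonal matrix acting on each level as the Householder reflection
    along a vector with nonzero entries, and [P] the permutation matrix swapping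
    [2a] and [2a+1] (fixing the last vertex when [n] is odd).  Then [A = Q P Q] is
    a symmetric involution and [A i j = \sum_r Q i r * Q (P r) j].  Since [r] is
    determined by the levels of [r] and [P r], at most one term survives; it is
    nonzero exactly when the levels of [i] and [j] are consecutive, or when both
    lie in the top level and that level is a pair (the extra edge of [G'_k]). *)

Section SymmetricSpectrum.
Variables (F : rcfType) (n : nat) (A : 'M[F]_n).
Hypothesis symA : A^T = A.

Let B : 'M[F[i]]_n := map_mx (real_complex F) A.

Let B_hermsym : B \is hermsymmx.
Proof.
apply: realsym_hermsym.
  by apply/is_hermitianmxP; rewrite expr0 scale1r map_mx_id // /B map_trmx symA.
by apply/mxOverP => i j; rewrite mxE; apply/complex_realP; exists (A i j).
Qed.

Let d := spectral_diag B.

Let B_spectral : B = invmx (spectralmx B) *m diag_mx d *m spectralmx B.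
Proof. exact/orthomx_spectralP/hermitian_normalmx/B_hermsym. Qed.

Let d_real i : d 0 i \is Num.real.
Proof. by have /mxOverP := hermitian_spectral_diag_real B_hermsym; apply. Qed.

Let eigenvalue_B_spectral_diag i : eigenvalue B (d 0 i).
Proof.
set P := spectralmx B; have P_unit : P \in unitmx := spectral_unit B.
apply/eigenvalueP; exists (row i P).
  rewrite -row_mul [in P *m B]B_spectral !mulmxA mulmxV // mul1mx.
  by rewrite row_mul row_diag_mx -scalemxAl -rowE.
apply: contraTneq P_unit => row0.
rewrite -row_free_unit; apply/row_freeP => -[Q /(congr1 (row i))].
rewrite row_mul row0 mul0mx row1 => /rowP/(_ i).
by rewrite !mxE andTb eqxx => /esym/eqP; rewrite oner_eq0.
Qed.

Let eigenvalue_Re_spectral_diag i : eigenvalue A (complex.Re (d 0 i)).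
Proof.
have := eigenvalue_B_spectral_diag i; rewrite -(RRe_real (d_real i)).
by rewrite !eigenvalue_root_char /B -map_char_poly fmorph_root.
Qed.

Lemma symmx_eq_scalar (r : F) : (forall a, eigenvalue A a -> a = r) -> A = r%:M.
Proof.
move=> eigA; apply: (@map_mx_inj _ _ (real_complex F)); rewrite map_scalar_mx.
have dE : diag_mx d = (r%:C)%C%:M.
  apply/matrixP => i j; rewrite !mxE -(RRe_real (d_real i)).
  by rewrite (eigA _ (eigenvalue_Re_spectral_diag i)); case: (i == j).
by rewrite -/B B_spectral dE mul_mx_scalar -scalemxAl mulVmx ?spectral_unit ?scalemx1.
Qed.

End SymmetricSpectrum.

Section Involution.
Variables (F : fieldType) (n : nat) (A : 'M[F]_n).
Hypothesis AA : A *m A = 1%:M.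

Lemma involution_eigenvalue_sqr a : eigenvalue A a -> a ^+ 2 = 1.
Proof.
case/eigenvalueP => v vA v0; apply/eqP; rewrite eq_sym -subr_eq0.
have : v *m (A *m A) = a ^+ 2 *: v by rewrite mulmxA vA -scalemxAl vA scalerA.
rewrite AA mulmx1 -[X in X = _]scale1r => /eqP; rewrite -subr_eq0 -scalerBl.
by rewrite scaler_eq0 (negbTE v0) orbF.
Qed.

Lemma involution_eigenvalue a i : a ^+ 2 = 1 -> row i (A + a%:M) != 0 -> eigenvalue A a.
Proof.
move=> a2 v0; apply/eigenvalueP; exists (row i (A + a%:M)) => //.
rewrite -row_mul mulmxDl AA mul_scalar_mx -linearZ /= scalerDr scale_scalar_mx.
by rewrite -expr2 a2 addrC.
Qed.

End Involution.

Lemma num_distinct_eig_ge2 n (A : 'M[R]_n) (i j : 'I_n) m :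
  A^T = A -> i != j -> A i j != 0 -> num_distinct_eig A m -> (1 < m)%N.
Proof.
move=> symA ij Aij [s [_ <- eigA]]; rewrite ltnNge; apply: contra Aij => s_small.
have single : forall a, eigenvalue A a -> a = head 0 s.
  by move=> a /eigA; case: s {eigA} s_small => [|b [|]] //; rewrite inE => _ /eqP.
by rewrite (symmx_eq_scalar symA single) mxE (negbTE ij).
Qed.

Lemma num_distinct_eig_involution n (A : 'M[R]_n) (i j : 'I_n) :
  A *m A = 1%:M -> i != j -> A i j != 0 -> num_distinct_eig A 2.
Proof.
move=> AA ij Aij.
have N1_neq1 : (-1 : R) != 1 by rewrite lt_eqF // (lt_trans (ltrN10 R)) ?ltr01.
exists [:: 1; -1]; split => //=; first by rewrite inE eq_sym N1_neq1.
have row_neq0 a : row i (A + a%:M) != 0.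
  by apply: contraNneq Aij => /rowP/(_ j); rewrite !mxE (negbTE ij) mulr0n addr0 => ->.
move=> a; split.
  by move/(involution_eigenvalue_sqr AA); rewrite !inE -sqrf_eq1 => /eqP ->.
rewrite !inE => /orP[]/eqP->.
  by apply: (involution_eigenvalue AA _ (row_neq0 1)); rewrite expr1n.
by apply: (involution_eigenvalue AA _ (row_neq0 (-1))); rewrite sqrrN expr1n.
Qed.

Lemma q_eq_two n (G : rel 'I_n) (A : 'M[R]_n) (i j : 'I_n) :
  inS G A -> A *m A = 1%:M -> i != j -> G i j -> q_eq G 2.
Proof.
move=> SA AA ij Gij; have Aij : A i j != 0 by case: SA => _ ->.
split; first by exists A; split; last exact: num_distinct_eig_involution AA ij Aij.
move=> B m [symB BG]; have Bij : B i j != 0 by rewrite BG.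
exact: num_distinct_eig_ge2 symB ij Bij.
Qed.

Section PermConjugation.
Variables (F : idomainType) (n : nat) (Q : 'M[F]_n) (s : {perm 'I_n}).
Hypotheses (symQ : Q^T = Q) (QQ : Q *m Q = 1%:M) (sK : involutive s).

Lemma perm_mx_involutive : perm_mx s *m perm_mx s = 1%:M :> 'M[F]_n.
Proof.
rewrite -perm_mxM -perm_mx1; congr perm_mx.
by apply/permP => r; rewrite permM sK perm1.
Qed.

Lemma tr_perm_mx_involutive : (perm_mx s)^T = perm_mx s :> 'M[F]_n.
Proof.
rewrite tr_perm_mx; congr perm_mx; apply/eqP; rewrite eq_invg_mul.
by apply/eqP/permP => r; rewrite permM sK perm1.
Qed.

Lemma conj_perm_mx_sym : (Q *m perm_mx s *m Q)^T = Q *m perm_mx s *m Q.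
Proof. by rewrite !trmx_mul symQ tr_perm_mx_involutive mulmxA. Qed.

Lemma conj_perm_mx_involutive :
  (Q *m perm_mx s *m Q) *m (Q *m perm_mx s *m Q) = 1%:M.
Proof.
by rewrite !mulmxA -(mulmxA (Q *m _)) QQ mulmx1 -(mulmxA Q) perm_mx_involutive mulmx1.
Qed.

Lemma conj_perm_mxE i j : (Q *m perm_mx s *m Q) i j = \sum_r Q i r * Q (s r) j.
Proof. by rewrite -mulmxA -row_permE mxE; apply: eq_bigr => r _; rewrite mxE. Qed.

Variables (T : eqType) (lev : 'I_n -> T).
Hypotheses (Q_neq0 : forall i j, (Q i j != 0) = (lev i == lev j))
           (lev_s_inj : injective (fun r => (lev r, lev (s r)))).

Lemma conj_perm_mx_neq0 i j :
  ((Q *m perm_mx s *m Q) i j != 0) = [exists r, (lev r == lev i) && (lev (s r) == lev j)].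
Proof.
have term_neq0 r : (Q i r * Q (s r) j != 0) = (lev r == lev i) && (lev (s r) == lev j).
  by rewrite mulf_eq0 negb_or !Q_neq0 eq_sym.
rewrite conj_perm_mxE; apply/idP/existsP => [sum_neq0|[r0 r0P]].
  apply/existsP; apply: contraNT sum_neq0 => /existsPn noterm.
  by rewrite big1 // => r _; apply/eqP; rewrite -[_ == 0]negbK term_neq0 noterm.
rewrite (bigD1 r0) //= big1 ?addr0 ?term_neq0 // => r r_neq0.
apply/eqP; rewrite -[_ == 0]negbK term_neq0; apply: contra r_neq0 => rP.
by apply/eqP/lev_s_inj; move: rP r0P => /andP[/eqP-> /eqP->] /andP[/eqP-> /eqP->].
Qed.

End PermConjugation.

Section LevelReflection.
Variables (F : realFieldType) (n : nat) (T : eqType) (lev : 'I_n -> T) (x : 'I_n -> F).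
Hypothesis x_neq0 : forall r, x r != 0.

Definition level_sqnorm (a : T) : F := \sum_(r | lev r == a) x r ^+ 2.

Definition level_proj : 'M[F]_n :=
  \matrix_(i, j) ((lev i == lev j)%:R * (x i * x j) / level_sqnorm (lev i)).

Definition level_reflection : 'M[F]_n := 1%:M - 2%:R *: level_proj.

Lemma level_sqnorm_gt0 i : 0 < level_sqnorm (lev i).
Proof.
rewrite /level_sqnorm (bigD1 i) //= ltr_pwDl ?exprn_even_gt0 ?x_neq0 //.
by apply: sumr_ge0 => r _; rewrite sqr_ge0.
Qed.

Lemma level_proj_sym : level_proj^T = level_proj.
Proof.
apply/matrixP => i j; rewrite !mxE eq_sym.
by case: (eqVneq (lev j) (lev i)) => [->|_]; rewrite ?mul0r // [x j * _]mulrC.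
Qed.

Lemma level_proj_idem : level_proj *m level_proj = level_proj.
Proof.
apply/matrixP => i j; have N_neq0 := lt0r_neq0 (level_sqnorm_gt0 i).
pose K := (lev i == lev j)%:R * (x i * x j) / level_sqnorm (lev i) ^+ 2.
have term r : level_proj i r * level_proj r j = if lev r == lev i then x r ^+ 2 * K else 0.
  rewrite !mxE eq_sym; case: (eqVneq (lev r) (lev i)) => [->|_]; last by rewrite !mul0r.
  by rewrite /K mul1r; set b := _%:R; field.
rewrite !mxE (eq_bigr _ (fun r _ => term r)) -big_mkcond -mulr_suml -/(level_sqnorm _) /K.
by field.
Qed.

Lemma level_reflection_sym : level_reflection^T = level_reflection.
Proof. by rewrite /level_reflection linearB linearZ /= level_proj_sym trmx1. Qed.

Lemma level_reflection_involutive : level_reflection *m level_reflection = 1%:M.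
Proof.
rewrite /level_reflection mulmxBl !mulmxBr !mul1mx mulmx1 -!scalemxAl -!scalemxAr.
by rewrite scalerA level_proj_idem; apply/matrixP => i j; rewrite !mxE; ring.
Qed.

Lemma level_reflection_neq0 i j :
  level_sqnorm (lev i) != 2%:R * x i ^+ 2 ->
  (level_reflection i j != 0) = (lev i == lev j).
Proof.
move=> Nii; have N_neq0 := lt0r_neq0 (level_sqnorm_gt0 i).
rewrite !mxE; case: (eqVneq i j) => [<-|ij] /=.
  rewrite eqxx (_ : 1 - _ = (level_sqnorm (lev i) - 2%:R * x i ^+ 2) / level_sqnorm (lev i)).
    by rewrite mulf_eq0 invr_eq0 negb_or N_neq0 subr_eq0 Nii.
  by rewrite mul1r; field.
rewrite add0r oppr_eq0; case: (eqVneq (lev i) (lev j)) => [e|ne].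
  by rewrite !mulf_eq0 invr_eq0 (negbTE N_neq0) !(negbTE (x_neq0 _)) !pnatr_eq0.
by rewrite !mul0r mulr0 eqxx.
Qed.

End LevelReflection.

Section PairSwap.
Variable n : nat.

Definition pair_swap (r : nat) : nat :=
  if odd r then r.-1 else if (r.+1 < n)%N then r.+1 else r.

Lemma pair_swap_lt (r : 'I_n) : (pair_swap r < n)%N.
Proof. by rewrite /pair_swap; have := ltn_ord r; case: ifP; [|case: ifP]; lia. Qed.

Definition swap_ord (r : 'I_n) : 'I_n := Ordinal (pair_swap_lt r).

Lemma swap_ordK : involutive swap_ord.
Proof.
move=> r; apply: val_inj; have := ltn_ord r; rewrite /= /pair_swap.
by case: (boolP (odd r)) => odd_r; repeat case: ifP; rewrite /=; lia.
Qed.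

Definition swap_perm : {perm 'I_n} := perm (inv_inj swap_ordK).

Lemma swap_permE (r : 'I_n) : swap_perm r = swap_ord r.
Proof. exact: permE. Qed.

Lemma lvl_swap_inj : injective (fun r : 'I_n => (lvl r, lvl (swap_perm r))).
Proof.
move=> r r' [+ +]; rewrite !swap_permE /= /pair_swap /lvl.
have := ltn_ord r; have := ltn_ord r'.
by repeat case: ifP; move=> *; apply: ord_inj; lia.
Qed.

Lemma lvl_swap_adj (i j : 'I_n) :
  [exists r : 'I_n, (lvl r == lvl i) && (lvl (swap_perm r) == lvl j)] =
  level_adj i j || [&& odd n, lvl i == n./2 & lvl j == n./2].
Proof.
have := ltn_ord i; have := ltn_ord j; rewrite /level_adj => i_lt j_lt.
apply/existsP/idP => [[r]|].
  by rewrite swap_permE /= /pair_swap /lvl; have := ltn_ord r; repeat case: ifP; lia.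
have witness (w : nat) (w_lt : (w < n)%N) :
    (lvl w == lvl i) && (lvl (pair_swap w) == lvl j) -> exists r : 'I_n,
    (lvl r == lvl i) && (lvl (swap_perm r) == lvl j).
  by move=> wP; exists (Ordinal w_lt); rewrite swap_permE.
rewrite /lvl => /orP[/orP[]|/and3P[]].
- move=> ?; apply: (@witness (2 * lvl j).+1);
  by rewrite /pair_swap /lvl; repeat case: ifP; lia.
- move=> ?; apply: (@witness (2 * lvl i));
  by rewrite /pair_swap /lvl; repeat case: ifP; lia.
- move=> ? ? ?; apply: (@witness n.-1);
  by rewrite /pair_swap /lvl; repeat case: ifP; lia.
Qed.

End PairSwap.

Section Candle.
Variable n : nat.

(* The squares [4] and [9] of the weights satisfy [9 c <> 4] and [4 c <> 9] for
   every [c : nat]: this is what keeps the diagonal of the reflection nonzero. *)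
Definition candle_weight (r : 'I_n) : R := (if odd r then 2 else 3)%N%:R.

Lemma candle_weight_neq0 r : candle_weight r != 0.
Proof. by rewrite pnatr_eq0; case: odd. Qed.

Lemma candle_sqnorm_neq (i : 'I_n) :
  level_sqnorm (fun r : 'I_n => lvl r) candle_weight (lvl i) != 2%:R * candle_weight i ^+ 2.
Proof.
rewrite /level_sqnorm (bigD1 i) //=.
rewrite (eq_bigr (fun _ => (if odd i then 3 else 2)%N%:R ^+ 2)); last first.
  move=> r /andP[/eqP lvl_r r_neq_i].
  rewrite /candle_weight; congr (_%:R ^+ 2).
  have : odd r = ~~ odd i by move: r_neq_i lvl_r; rewrite -val_eqE /lvl /=; lia.
  by move=> ->; case: odd.
rewrite sumr_const /candle_weight !expr2 -!natrM -[_ *+ #|_|]mulr_natr -natrM.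
by rewrite -natrD eqr_nat; case: odd; lia.
Qed.

Lemma swap_permK : involutive (swap_perm n).
Proof. by move=> r; rewrite !swap_permE swap_ordK. Qed.

Definition candle_reflection : 'M[R]_n :=
  level_reflection (fun r : 'I_n => lvl r) candle_weight.

Definition candle_mx : 'M[R]_n :=
  candle_reflection *m perm_mx (swap_perm n) *m candle_reflection.

Lemma candle_mx_sym : candle_mx^T = candle_mx.
Proof. exact: conj_perm_mx_sym (level_reflection_sym _ _) swap_permK. Qed.

Lemma candle_mx_involutive : candle_mx *m candle_mx = 1%:M.
Proof.
apply: conj_perm_mx_involutive swap_permK.
exact: level_reflection_involutive candle_weight_neq0.
Qed.

Lemma candle_mx_neq0 i j :
  (candle_mx i j != 0) = level_adj i j || [&& odd n, lvl i == n./2 & lvl j == n./2].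
Proof.
rewrite -lvl_swap_adj (conj_perm_mx_neq0 (lev := fun r : 'I_n => lvl r)) //;
  last exact: lvl_swap_inj.
by move=> r c; have := level_reflection_neq0 candle_weight_neq0 c (candle_sqnorm_neq r).
Qed.

End Candle.

Lemma candle_inS_Gk k : inS (Gk k) (candle_mx (2 * k)).
Proof.
split; first exact: candle_mx_sym.
by move=> i j _; rewrite candle_mx_neq0 oddM andFb orbF.
Qed.

Lemma candle_inS_Gk' k : inS (Gk' k) (candle_mx (2 * k + 1)).
Proof.
split; first exact: candle_mx_sym.
move=> i j; rewrite candle_mx_neq0 /Gk' /level_adj -val_eqE /lvl /=.
by have := ltn_ord i; have := ltn_ord j; lia.
Qed.

Lemma q_eq_candle n (G : rel 'I_n) : (1 < n)%N -> inS G (candle_mx n) -> q_eq G 2.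
Proof.
move=> n_gt1 SG; have n_gt0 := ltnW n_gt1.
apply: (q_eq_two (i := Ordinal n_gt0) (j := Ordinal n_gt1) SG (candle_mx_involutive n)) => //.
by case: SG => _ <- //; rewrite candle_mx_neq0.
Qed.

Theorem mainTheorem2 :
  (forall k : nat, (2 <= k)%N -> q_eq (Gk k) 2 /\ q_eq (Gk' k) 2) /\
  q_eq (Gk' 1) 2 /\
  (forall k : nat, (2 <= k)%N ->
     exists A : 'M[R]_(2 * k), inS (Gk k) A /\ A *m A^T = 1%:M).
Proof.
have q_Gk k : (0 < k)%N -> q_eq (Gk k) 2.
  by move=> k_gt0; apply: q_eq_candle (candle_inS_Gk k); lia.
have q_Gk' k : (0 < k)%N -> q_eq (Gk' k) 2.
  by move=> k_gt0; apply: q_eq_candle (candle_inS_Gk' k); lia.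
split; first by move=> k k_ge2; split; [apply: q_Gk | apply: q_Gk']; apply: ltnW.
split; first exact: q_Gk'.
move=> k _; exists (candle_mx (2 * k)); split; first exact: candle_inS_Gk.
by rewrite candle_mx_sym candle_mx_involutive.
Qed.
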